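(* Let $a$ be an integer, let $n$ be a positive odd integer, and let $q\neq 1$ be a positive real number. Define the $n\times n$ matrices $$A=\left[q^{\lfloor\frac{aj-(a+1)k}{n}\rfloor}\right]_{1\leqslant j,k\leqslant n},\qquad A'=\left[q^{\lceil\frac{(a+1)j-ak}{n}\rceil}\right]_{1\leqslant j,k\leqslant n}.$$ If $\gcd(a(a+1),n)>1$, then $$\operatorname{rank}(A)\leqslant\frac n3\quad\text{and}\quad \operatorname{rank}(A')\leqslant\frac n3.$$
   Context: $\lfloor x\rfloor$ is the largest integer not exceeding $x$ and $\lceil x\rceil$ is the least integer not smaller than $x$. *)

From HB Require Import structures.
From mathcomp Require Import all_boot all_order all_algebra.
Set Implicit Arguments. Unset Strict Implicit. Unset Printing Implicit Defensive.
Import Order.TTheory GRing.Theory Num.Theory.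
Local Open Scope ring_scope.

(* floor of the rational number x / n for n > 0 : intdiv's Euclidean quotient,
   which for a positive divisor is exactly the floor. *)
Definition floor_div (x : int) (n : nat) : int := (x %/ n%:Z)%Z.
Definition ceil_div (x : int) (n : nat) : int := - ((- x) %/ n%:Z)%Z.

(* A = [ q ^ floor((a j - (a+1) k)/n) ]_{1<=j,k<=n}, indices shifted: j = i+1. *)
Definition matA (R : unitRingType) (q : R) (a : int) (n : nat) : 'M[R]_n :=
  \matrix_(j < n, k < n)
    q ^ (floor_div (a * (j.+1)%:Z - (a + 1) * (k.+1)%:Z) n).

Definition matA' (R : unitRingType) (q : R) (a : int) (n : nat) : 'M[R]_n :=
  \matrix_(j < n, k < n)
    q ^ (ceil_div ((a + 1) * (j.+1)%:Z - a * (k.+1)%:Z) n).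

From HB Require Import structures.
From mathcomp Require Import all_boot all_order all_algebra.
From mathcomp Require Import all_reals.
From mathcomp Require Import zify ring.
Set Implicit Arguments. Unset Strict Implicit. Unset Printing Implicit Defensive.
Import Order.TTheory GRing.Theory Num.Theory.
Local Open Scope ring_scope.

(* Both matrices have entries q ^ h(c j + d k) with h the floor or the ceiling
   of division by n, and h(x + m n) = m + h(x).  If a prime p divides n and c,
   then moving j by t = n / p changes c j by (c / p) n, so row j + t is
   q ^ (c / p) times row j and the rank is at most t; symmetrically for
   columns when p divides d.  Since p | a (a + 1) divides one of the two
   coefficients, and p >= 3 because n is odd, the rank is at most n / 3. *)

Lemma mxrank_le_row_period (F : fieldType) (m n t : nat) (M : 'M[F]_(m, n)) :
  (0 < t)%N ->
  (forall i i0 : 'I_m, i = (i0 + t)%N :> nat -> exists c, row i M = c *: row i0 M) ->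
  (\rank M <= t)%N.
Proof.
move=> t_gt0 periodic; have [mt | tm] := leqP m t.
  exact: leq_trans (rank_leq_row M) mt.
pose first_rows := rowsub (fun i : 'I_t => widen_ord (ltnW tm) i) M.
apply: leq_trans (rank_leq_row first_rows); apply: mxrankS; apply/row_subP.
suff rowS k (i : 'I_m) : (i < k)%N -> (row i M <= first_rows)%MS.
  by move=> i; exact: (rowS m i).
elim: k i => [|k IHk] i // ltik.
have [it | ti] := ltnP i t.
  have -> : i = widen_ord (ltnW tm) (Ordinal it) by apply: val_inj.
  by rewrite -row_rowsub row_sub.
have i0m : (i - t < m)%N by have := ltn_ord i; lia.
have [c ->] := periodic i (Ordinal i0m) (esym (subnK ti)).
by apply/scalemx_sub/IHk => /=; lia.
Qed.

Lemma floor_div_shift (x m : int) (n : nat) :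
  (0 < n)%N -> floor_div (x + m * n%:Z) n = m + floor_div x n.
Proof. by move=> n_gt0; rewrite /floor_div addrC divzMDl // eqz_nat -lt0n. Qed.

Lemma ceil_div_shift (x m : int) (n : nat) :
  (0 < n)%N -> ceil_div (x + m * n%:Z) n = m + ceil_div x n.
Proof.
move=> n_gt0; rewrite /ceil_div.
have -> : - (x + m * n%:Z) = - m * n%:Z + - x by ring.
by rewrite divzMDl ?eqz_nat -?lt0n // opprD opprK.
Qed.

Section ExpMatrix.

Variables (F : fieldType) (q : F) (n : nat) (h : int -> int).
Hypothesis q_neq0 : q != 0.
Hypothesis h_shift : forall x m : int, h (x + m * n%:Z) = m + h x.

Definition expmx (c d : int) : 'M[F]_n :=
  \matrix_(j < n, k < n) q ^ h (c * j.+1%:Z + d * k.+1%:Z).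

Lemma tr_expmx (c d : int) : (expmx c d)^T = expmx d c.
Proof. by apply/matrixP => j k; rewrite !mxE addrC. Qed.

Variables (p t : nat).
Hypothesis n_eq : n = (t * p)%N.

Lemma row_expmx_period (c d : int) (i i0 : 'I_n) :
  (p%:Z %| c)%Z -> i = (i0 + t)%N :> nat ->
  row i (expmx c d) = q ^ (c %/ p%:Z)%Z *: row i0 (expmx c d).
Proof.
move=> /divzK; move: (c %/ p%:Z)%Z => b <- i_eq.
apply/rowP => k; rewrite !mxE i_eq -expfzDr //.
rewrite -h_shift; congr (_ ^ h _).
have n_eqZ : n%:Z = t%:Z * p%:Z by rewrite n_eq PoszM.
by rewrite n_eqZ -addSn PoszD; ring.
Qed.

Lemma rank_expmx_le (c d : int) :
  (0 < t)%N -> (p%:Z %| c)%Z || (p%:Z %| d)%Z -> (\rank (expmx c d) <= t)%N.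
Proof.
move=> t_gt0 /orP[p_c | p_d].
  apply: mxrank_le_row_period => // i i0 i_eq.
  by eexists; exact: row_expmx_period.
rewrite -mxrank_tr tr_expmx.
apply: mxrank_le_row_period => // i i0 i_eq.
by eexists; exact: row_expmx_period.
Qed.

End ExpMatrix.

Lemma matA_expmx (F : fieldType) (q : F) (a : int) (n : nat) :
  matA q a n = expmx q n (floor_div ^~ n) a (- (a + 1)).
Proof. by apply/matrixP => j k; rewrite !mxE mulNr. Qed.

Lemma matA'_expmx (F : fieldType) (q : F) (a : int) (n : nat) :
  matA' q a n = expmx q n (ceil_div ^~ n) (a + 1) (- a).
Proof. by apply/matrixP => j k; rewrite !mxE mulNr. Qed.

Lemma Euclidz_dvdM (p : nat) (m n : int) :
  prime p -> (p%:Z %| m * n)%Z = (p%:Z %| m)%Z || (p%:Z %| n)%Z.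
Proof. by move=> p_prime; rewrite !dvdzE abszM Euclid_dvdM. Qed.

Lemma odd_prime_divisor_gcdz (b : int) (n : nat) :
  odd n -> 1 < gcdz b n%:Z ->
  exists2 p : nat, [/\ prime p, (p %| n)%N & (3 <= p)%N] & (p%:Z %| b)%Z.
Proof.
rewrite /gcdz ltz_nat => odd_n gt1; set g := gcdn _ _ in gt1.
have p_g : (pdiv g %| g)%N := pdiv_dvd g.
have p_n : (pdiv g %| n)%N := dvdn_trans p_g (dvdn_gcdr _ _).
exists (pdiv g); last by rewrite dvdzE; apply: dvdn_trans p_g (dvdn_gcdl _ _).
have p_prime := pdiv_prime gt1; split=> //.
have p_neq2 : pdiv g != 2%N by apply: contraTneq p_n => ->; rewrite dvdn2 odd_n.
by have := prime_gt1 p_prime; lia.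
Qed.

Theorem lemma3p1 (R : realType) (a : int) (n : nat) (q : R) :
  (0 < n)%N -> odd n -> 0 < q -> q != 1 ->
  1 < gcdz (a * (a + 1)) n%:Z ->
  (3 * \rank (matA q a n) <= n)%N /\ (3 * \rank (matA' q a n) <= n)%N.
Proof.
move=> n_gt0 odd_n q_gt0 _ /(odd_prime_divisor_gcdz odd_n)[p [p_prime p_n p_ge3]].
rewrite Euclidz_dvdM // => p_aa1.
have q_neq0 : q != 0 by rewrite gt_eqF.
have n_eq : n = (n %/ p * p)%N by rewrite divnK.
have t_gt0 : (0 < n %/ p)%N by rewrite divn_gt0 ?prime_gt0 // dvdn_leq.
have three_t : (3 * (n %/ p) <= n)%N by rewrite [X in (_ <= X)%N]n_eq mulnC leq_mul2l p_ge3 orbT.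
split; apply: leq_trans three_t; rewrite leq_mul2l /=.
- rewrite matA_expmx; apply: (rank_expmx_le q_neq0 _ n_eq) => //.
    by move=> x m; exact: floor_div_shift.
  by rewrite rpredN.
- rewrite matA'_expmx; apply: (rank_expmx_le q_neq0 _ n_eq) => //.
    by move=> x m; exact: ceil_div_shift.
  by rewrite rpredN orbC.
Qed.
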